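(* For every binary cellular automaton $C=(\{0,1\},\delta)$ with blank symbol $1$ there exist an integer $N$ and a $(2N+2)$-dimensional subtraction game $\mathcal{D}_C$ (finite difference set in $\mathbb{Z}^{2N+2}$ with all vectors of positive coordinate sum) such that $c(t,u)=p(Nt+u,\,Nt-u,\,0,0,\dots,0,1)$ for all integers $t\ge0$ and $u$ with $|u|\le Nt$, where $c(t,u)$ is the content of cell $u$ at time $t$ of $C$ started from the configuration with $c(0,u)=0$ iff $u=0$, and $p(\cdot)$ is the value of a position of $\mathcal{D}_C$.
   Context: Binary cellular automaton with neighborhood size $r$: configurations $c:\mathbb{Z}\to\{0,1\}$, one step maps $c$ to $c'$ with $c'(u)=\delta(c(u-r),\dots,c(u+r))$ for $\delta:\{0,1\}^{2r+1}\to\{0,1\}$; blank symbol $1$ means $\delta(1,\dots,1)=1$. Subtraction game with finite difference set $D\subset\mathbb{Z}^d$: positions $x\in\mathbb{Z}_{\ge0}^d$, move from $x$ to $y\in\mathbb{Z}_{\ge0}^d$ iff $x-y\in D$; normal play. The value of a position is $0$ for a P-position (player to move has no winning strategy) and $1$ for an N-position. *)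

From HB Require Import structures.
From mathcomp Require Import all_boot all_order all_algebra.
Set Implicit Arguments. Unset Strict Implicit. Unset Printing Implicit Defensive.
Import Order.TTheory GRing.Theory Num.Theory.
Local Open Scope ring_scope.

(** Binary cellular automata. Symbol 0 is [false], symbol 1 is [true].
    A local rule of neighborhood size r is a map from the window
    (c(u-r), ..., c(u+r)), indexed by 'I_(2r+1), to a symbol. *)
Definition config := int -> bool.

Definition ca_step (r : nat) (delta : {ffun 'I_(2 * r + 1) -> bool} -> bool)
  (c : config) : config :=
  fun u => delta [ffun j : 'I_(2 * r + 1) => c (u - r%:Z + (nat_of_ord j)%:Z)].

Definition blank_one (r : nat) (delta : {ffun 'I_(2 * r + 1) -> bool} -> bool) : Prop :=
  delta [ffun => true] = true.

Definition init_config : config := fun u => u != 0.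

Definition ca_run (r : nat) (delta : {ffun 'I_(2 * r + 1) -> bool} -> bool)
  (t : nat) (u : int) : bool := iter t (ca_step delta) init_config u.

Definition vec (d : nat) := {ffun 'I_d -> int}.

Definition nonneg (d : nat) (x : vec d) : Prop := forall i, 0 <= x i.

Definition game_move (d : nat) (D : seq (vec d)) (x y : vec d) : Prop :=
  nonneg y /\ [ffun i => x i - y i] \in D.

(** N-positions (player to move has a winning strategy), defined inductively:
    x is an N-position iff there is a move to some y from which every move
    leads to an N-position (i.e. y is a P-position). *)
Inductive N_position (d : nat) (D : seq (vec d)) : vec d -> Prop :=
| NPos x y : game_move D x y ->
    (forall z, game_move D y z -> N_position D z) -> N_position D x.

(** Value of a position: 1 (true) for an N-position, 0 (false) for a
    P-position (no winning strategy). Stated as a boolean specification. *)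
Definition game_value_is (d : nat) (D : seq (vec d)) (x : vec d) (b : bool) : Prop :=
  b = true <-> N_position D x.

Definition positive_sums (d : nat) (D : seq (vec d)) : Prop :=
  forall v, v \in D -> 0 < \sum_(i < d) v i.

Definition ca_position (N t : nat) (u : int) : vec (2 * N + 2) :=
  [ffun i : 'I_(2 * N + 2) =>
     if nat_of_ord i == 0%N then (N * t)%:Z + u
     else if nat_of_ord i == 1%N then (N * t)%:Z - u
     else if nat_of_ord i == (2 * N + 1)%N then 1
     else 0].

(* The first two coordinates of a position are counters (a, b), the last one
   holds a token marking a control state; a + b = 2Nt encodes the time t and
   a - b = 2u the cell u.  From the main state the mover proposes a window w of
   2r+1 cells with delta w = 1; the opponent then challenges one cell j of w.
   If w j = 1 he moves straight back to the main state at time t-1 and cell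
   u + j - r, claiming that this cell is 0 (a P-position); if w j = 0 he
   detours through a return state that forces the proposer to move there
   instead.  Every round subtracts N - (j - r) from a and N + (j - r) from b,
   so the proposal survives exactly when w is the true window of cell u at
   time t-1, and the main state is an N-position iff delta of that window is 1.
   Induction on t then matches game values with the automaton; cells outside
   the light cone |u| <= Nt correspond to illegal positions and are blank. *)

From HB Require Import structures.
From mathcomp Require Import all_boot all_order all_algebra.
From mathcomp Require Import zify.
From Stdlib Require Import Classical.
Set Implicit Arguments. Unset Strict Implicit. Unset Printing Implicit Defensive.
Import Order.TTheory GRing.Theory Num.Theory.
Local Open Scope ring_scope.

Section SubtractionGame.
Variables (d : nat) (D : seq (vec d)).
Hypothesis D_pos : positive_sums D.

Definition coord_sum (x : vec d) : int := \sum_(i < d) x i.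

Lemma coord_sum_ge0 x : nonneg x -> 0 <= coord_sum x.
Proof. by move=> x_ge0; apply: sumr_ge0 => i _; apply: x_ge0. Qed.

Lemma game_move_sum_lt x y : game_move D x y -> coord_sum y < coord_sum x.
Proof.
case=> _ /D_pos; under eq_bigr do rewrite ffunE.
by rewrite sumrB subr_gt0.
Qed.

Lemma game_ind (P : vec d -> Prop) :
  (forall x, nonneg x -> (forall y, game_move D x y -> P y) -> P x) ->
  forall x, nonneg x -> P x.
Proof.
move=> IH x x_ge0; have [k def_k] : exists k : nat, coord_sum x = k%:Z.
  by exists `|coord_sum x|%N; rewrite gez0_abs // coord_sum_ge0.
elim/ltn_ind: k x x_ge0 def_k => k IHk x x_ge0 def_k.
apply: IH => // y xy; have y_ge0 : nonneg y by case: xy.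
have := game_move_sum_lt xy; have := coord_sum_ge0 y_ge0; rewrite def_k.
by move=> sy_ge0 lt_y; apply: (IHk `|coord_sum y|%N); rewrite ?gez0_abs //; lia.
Qed.

Lemma N_positionP x : nonneg x ->
  N_position D x <-> exists y, game_move D x y /\ ~ N_position D y.
Proof.
move: x; apply: game_ind => x _ IH; split.
  move=> x_N; case: x_N IH => {}x y xy y_P IH; exists y; split=> //.
  by move=> /(IH y xy) [z [yz z_P]]; exact/z_P/y_P.
case=> y [xy y_P]; apply: (NPos xy) => z yz; apply: NNPP => z_P.
by apply/y_P/(IH y xy); exists z.
Qed.

End SubtractionGame.

Record move (S : Type) := Move { move_a : int; move_b : int; move_to : S }.

Definition move_tuple S (m : move S) := (move_a m, move_b m, move_to m).
Definition tuple_move S (p : int * int * S) := Move p.1.1 p.1.2 p.2.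
Lemma move_tupleK S : cancel (@move_tuple S) (@tuple_move S). Proof. by case. Qed.
HB.instance Definition _ (S : eqType) := Equality.copy (move S) (can_type (@move_tupleK S)).

Section TokenGame.
Variables (d : nat) (S : finType) (idx : S -> nat) (moves : S -> seq (move S)).
Hypothesis idx_inj : injective idx.
Hypothesis idx_range : forall s, (2 <= idx s < d)%N.
Hypothesis move_to_neq : forall (s : S) (m : move S), m \in moves s -> move_to m != s.
Hypothesis move_sum_gt0 :
  forall (s : S) (m : move S), m \in moves s -> 0 < move_a m + move_b m.

Definition token_pos (a b : int) (k : nat) : vec d :=
  [ffun i : 'I_d => if nat_of_ord i == 0%N then a else if nat_of_ord i == 1%N then b
     else if nat_of_ord i == k then 1 else 0].

Definition move_vec (s : S) (m : move S) : vec d :=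
  [ffun i : 'I_d => if nat_of_ord i == 0%N then move_a m
     else if nat_of_ord i == 1%N then move_b m
     else if nat_of_ord i == idx s then 1
     else if nat_of_ord i == idx (move_to m) then -1 else 0].

Definition token_game : seq (vec d) := [seq move_vec s m | s <- enum S, m <- moves s].

Lemma token_pos_nonneg a b k : 0 <= a -> 0 <= b -> nonneg (token_pos a b k).
Proof. by move=> a_ge0 b_ge0 i; rewrite ffunE; do ! case: eqP. Qed.

Lemma idx_move_to_neq (s : S) (m : move S) : m \in moves s -> idx (move_to m) != idx s.
Proof. by move/move_to_neq; apply: contra => /eqP/idx_inj->. Qed.

Lemma sum_if_eq (k : nat) (x : int) : (k < d)%N ->
  \sum_(i < d) (if nat_of_ord i == k then x else 0) = x.
Proof.
move=> lt_kd; rewrite (bigD1 (Ordinal lt_kd)) //= eqxx big1 ?addr0 // => i /eqP i_neq.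
by case: eqP => // ik; case: i_neq; apply: val_inj.
Qed.

Lemma sum_move_vec (s : S) (m : move S) : m \in moves s ->
  \sum_(i < d) move_vec s m i = move_a m + move_b m.
Proof.
move=> /idx_move_to_neq/eqP neq_st.
have := idx_range s; have := idx_range (move_to m) => /andP[t_ge2 t_lt] /andP[s_ge2 s_lt].
rewrite (eq_bigr (fun i : 'I_d => (if nat_of_ord i == 0%N then move_a m else 0)
     + (if nat_of_ord i == 1%N then move_b m else 0)
     + (if nat_of_ord i == idx s then 1 else 0)
     + (if nat_of_ord i == idx (move_to m) then -1 else 0))).
  by rewrite !big_split /= !sum_if_eq //; lia.
by move=> i _; rewrite ffunE; do ! case: eqP => //= *; lia.
Qed.

Lemma token_game_positive_sums : positive_sums token_game.
Proof.
move=> v /allpairsPdep[s [m [_ m_in ->]]].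
by rewrite sum_move_vec //; apply: move_sum_gt0 m_in.
Qed.

Lemma token_moveP (s : S) a b y :
  game_move token_game (token_pos a b (idx s)) y <->
  exists2 m, m \in moves s &
    [/\ 0 <= a - move_a m, 0 <= b - move_b m
      & y = token_pos (a - move_a m) (b - move_b m) (idx (move_to m))].
Proof.
split; last first.
  case=> m m_in [a_ge b_ge ->]; split; first exact: token_pos_nonneg.
  apply/allpairsPdep; exists s, m; split; rewrite ?mem_enum //.
  have := idx_range s; have := idx_range (move_to m).
  move: (idx_move_to_neq m_in) => /eqP neq_ts /andP[t_ge2 _] /andP[s_ge2 _].
  by apply/ffunP => i; rewrite !ffunE; do ! case: eqP => //= *; lia.
case=> y_ge0 /allpairsPdep[s' [m [_ m_in /ffunP def_y]]].
have {}def_y i : y i = token_pos a b (idx s) i - move_vec s' m i.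
  by have := def_y i; rewrite ffunE => <-; lia.
have := idx_range s; have := idx_range s'; have := idx_range (move_to m).
move: (idx_move_to_neq m_in) => /eqP neq_ts'.
move=> /andP[t_ge2 _] /andP[s'_ge2 s'_lt] /andP[s_ge2 _].
have s's : s' = s.
  apply: idx_inj; have := y_ge0 (Ordinal s'_lt); rewrite def_y !ffunE /=.
  by do ! case: eqP => // ?; lia.
subst s'; exists m => //.
have [lt0d lt1d] : (0 < d)%N /\ (1 < d)%N by lia.
have := y_ge0 (Ordinal lt0d); have := y_ge0 (Ordinal lt1d).
rewrite !def_y !ffunE /= => b_ge a_ge; split=> //.
by apply/ffunP => i; rewrite def_y !ffunE; do ! case: eqP => //= *; lia.
Qed.

Definition P_position (s : S) (a b : int) : Prop :=
  [/\ 0 <= a, 0 <= b & ~ N_position token_game (token_pos a b (idx s))].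

Lemma token_game_N_positionP (s : S) a b : 0 <= a -> 0 <= b ->
  N_position token_game (token_pos a b (idx s)) <->
  exists2 m, m \in moves s & P_position (move_to m) (a - move_a m) (b - move_b m).
Proof.
move=> a_ge0 b_ge0.
rewrite (N_positionP token_game_positive_sums (token_pos_nonneg _ a_ge0 b_ge0)).
split.
  by case=> y [/token_moveP[m m_in [a_ge b_ge ->]] y_P]; exists m.
case=> m m_in [a_ge b_ge y_P].
by eexists; split; first by apply/token_moveP; exists m.
Qed.

End TokenGame.

Section CellularAutomatonGame.
Variables (r : nat) (delta : {ffun 'I_(2 * r + 1) -> bool} -> bool).
Hypothesis delta_blank : blank_one delta.

Local Notation n := (2 * r + 1)%N.
Local Notation window := {ffun 'I_(2 * r + 1) -> bool}.
Local Notation N := (2 ^ n + 2 * r + 2)%N.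

Definition offset (j : 'I_n) : int := j%:Z - r%:Z.

Definition cell_window (t : nat) (u : int) : window :=
  [ffun j => ca_run delta t (u + offset j)].

Lemma ca_runS t u : ca_run delta t.+1 u = delta (cell_window t u).
Proof.
by congr delta; apply/ffunP => j; rewrite !ffunE /offset addrA addrAC.
Qed.

Lemma ca_run_blank t u : (r * t)%:Z < `|u| -> ca_run delta t u.
Proof.
elim: t u => [|t IHt] u u_out.
  by rewrite /ca_run /= /init_config; apply: contraTneq u_out => ->.
rewrite ca_runS; have -> : cell_window t u = [ffun => true]; last exact: delta_blank.
apply/ffunP => j; rewrite !ffunE; apply: IHt.
by have := ltn_ord j; move: u_out; rewrite /offset mulnS; lia.
Qed.

Local Notation aux_state := ((bool * window) + (bool * 'I_n))%type.
Local Notation state := (option aux_state).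
Local Notation Main := (@None aux_state).
Local Notation Win X w := (Some (inl (X, w))).
Local Notation Ret X j := (Some (inr (X, j))).

(* Main sits on the last coordinate, as in [ca_position]; the 2 * 2^n + 2n
   auxiliary states fit on the coordinates 2 .. 2N. *)
Definition state_idx (s : state) : nat :=
  if s is Some s' then (2 + enum_rank s')%N else (2 * N + 1)%N.

(* The unit paid by the short moves, from a or from b: it keeps coordinate
   sums positive while one of the counters can always afford it. *)
Definition tick_a (X : bool) : int := if X then 1 else 0.
Definition tick_b (X : bool) : int := if X then 0 else 1.

Lemma tick_spec X : [/\ 0 <= tick_a X, 0 <= tick_b X & tick_a X + tick_b X = 1].
Proof. by case: X. Qed.

Definition win_move (X : bool) (w : window) (j : 'I_n) : move state :=
  if w j then Move (N%:Z - offset j - tick_a X) (N%:Z + offset j - tick_b X) Main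
  else Move (tick_a X) (tick_b X) (Ret X j).

Definition ca_moves (s : state) : seq (move state) :=
  match s with
  | None => [seq Move (tick_a X) (tick_b X) (Win X w)
              | X <- [:: true; false], w <- [seq w <- enum window | delta w]]
  | Win X w => [seq win_move X w j | j <- enum 'I_n]
  | Ret X j =>
      [:: Move (N%:Z - offset j - 2 * tick_a X) (N%:Z + offset j - 2 * tick_b X) Main]
  end.

Lemma aux_idx_lt (s : aux_state) : (2 + enum_rank s < 2 * N + 1)%N.
Proof.
have := ltn_ord (enum_rank s); move: (enum_rank s : nat) => k.
by rewrite card_sum !card_prod card_ffun !card_bool !card_ord; lia.
Qed.

Lemma state_idx_inj : injective state_idx.
Proof.
case=> [s|] [s'|] //= eq_idx.
- by congr Some; apply/enum_rank_inj/val_inj/(addnI eq_idx).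
- by have := aux_idx_lt s; rewrite eq_idx ltnn.
- by have := aux_idx_lt s'; rewrite -eq_idx ltnn.
Qed.

Lemma state_idx_range (s : state) : (2 <= state_idx s < 2 * N + 2)%N.
Proof.
case: s => [s|] /=; last lia.
by have := aux_idx_lt s; move: (enum_rank s : nat) => k; lia.
Qed.

Lemma ca_moves_to_neq (s : state) (m : move state) : m \in ca_moves s -> move_to m != s.
Proof.
case: s => [[[X w]|[X j]]|].
- by case/mapP=> j _ ->; rewrite /win_move; case: (w j).
- by rewrite inE => /eqP->.
- by move=> /allpairsPdep[X [w [_ _ ->]]].
Qed.

Lemma ca_moves_sum_gt0 (s : state) (m : move state) :
  m \in ca_moves s -> 0 < move_a m + move_b m.
Proof.
have ltjn (j : 'I_n) : 0 < N%:Z - `|offset j| by have := ltn_ord j; rewrite /offset; lia.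
case: s => [[[X w]|[X j]]|].
- case/mapP=> j _ ->; have := ltjn j; rewrite /win_move.
  by case: (w j); case: X => /=; lia.
- by rewrite inE => /eqP-> /=; have := ltjn j; case: X => /=; lia.
- by move=> /allpairsPdep[X [w [_ _ ->]]]; case: X.
Qed.

Local Notation ca_game := (token_game (2 * N + 2) state_idx ca_moves).
Local Notation is_N s a b := (N_position ca_game (token_pos (2 * N + 2) a b (state_idx s))).
Local Notation is_P := (P_position (2 * N + 2) state_idx ca_moves).

Lemma ca_game_N_positionP (s : state) a b : 0 <= a -> 0 <= b ->
  is_N s a b <->
  exists2 m, m \in ca_moves s & is_P (move_to m) (a - move_a m) (b - move_b m).
Proof.
apply: token_game_N_positionP.
- exact: state_idx_inj.
- exact: state_idx_range.
- exact: ca_moves_to_neq.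
- exact: ca_moves_sum_gt0.
Qed.

Lemma Main_N_positionP a b : 0 <= a -> 0 <= b ->
  is_N Main a b <->
  exists X w, delta w /\ is_P (Win X w) (a - tick_a X) (b - tick_b X).
Proof.
move=> a_ge0 b_ge0; rewrite ca_game_N_positionP //; split.
  by case=> _ /allpairsPdep[X [w [_ /[!mem_filter]/andP[dw _] ->]]] w_P; exists X, w.
case=> X [w [dw w_P]]; exists (Move (tick_a X) (tick_b X) (Win X w)) => //.
by apply/allpairsPdep; exists X, w; rewrite mem_filter dw mem_enum; case: {w_P}X.
Qed.

Lemma Win_N_positionP X w a b : 0 <= a -> 0 <= b ->
  is_N (Win X w) a b <->
  exists j, if w j
            then is_P Main (a - (N%:Z - offset j - tick_a X)) (b - (N%:Z + offset j - tick_b X))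
            else is_P (Ret X j) (a - tick_a X) (b - tick_b X).
Proof.
move=> a_ge0 b_ge0; rewrite ca_game_N_positionP //; split.
  by case=> _ /mapP[j _ ->] m_P; exists j; move: m_P; rewrite /win_move; case: (w j).
case=> j j_P; exists (win_move X w j); first exact/map_f/mem_enum.
by rewrite /win_move; case: (w j) in j_P *.
Qed.

Lemma Ret_N_positionP X j a b : 0 <= a -> 0 <= b ->
  is_N (Ret X j) a b <->
  is_P Main (a - (N%:Z - offset j - 2 * tick_a X)) (b - (N%:Z + offset j - 2 * tick_b X)).
Proof.
move=> a_ge0 b_ge0; rewrite ca_game_N_positionP //; split; first by case=> _ /[!inE]/eqP->.
by exists (Move (N%:Z - offset j - 2 * tick_a X) (N%:Z + offset j - 2 * tick_b X) Main);
  rewrite ?inE.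
Qed.

(* The statement also covers cells outside the light cone, where one counter
   is negative and the cell is blank; this makes the induction uniform. *)
Definition level_spec (t : nat) : Prop := forall v : int,
  is_P Main ((N * t)%:Z + v) ((N * t)%:Z - v) <-> ~~ ca_run delta t v.

Lemma level_spec0 : level_spec 0.
Proof.
move=> v; rewrite muln0 add0r sub0r /ca_run /= /init_config negbK; split.
  by case=> v_ge0 v_le0 _; apply/eqP; lia.
move/eqP->; split=> //; rewrite Main_N_positionP // => -[X [w [_ []]]].
by rewrite /tick_a /tick_b; case: X; lia.
Qed.

Section LevelStep.
Variable t : nat.
Hypothesis t_spec : level_spec t.
Local Notation x := (N * t)%:Z.

Lemma Ret_P_cell X j u :
  0 <= x + N%:Z + u - 2 * tick_a X -> 0 <= x + N%:Z - u - 2 * tick_b X ->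
  is_P (Ret X j) (x + N%:Z + u - 2 * tick_a X) (x + N%:Z - u - 2 * tick_b X) <->
  ca_run delta t (u + offset j).
Proof.
move=> a_ge0 b_ge0.
have Ret_N : is_N (Ret X j) (x + N%:Z + u - 2 * tick_a X) (x + N%:Z - u - 2 * tick_b X)
    <-> ~~ ca_run delta t (u + offset j).
  rewrite Ret_N_positionP // -t_spec.
  have -> : x + N%:Z + u - 2 * tick_a X - (N%:Z - offset j - 2 * tick_a X) = x + (u + offset j).
    by lia.
  have -> : x + N%:Z - u - 2 * tick_b X - (N%:Z + offset j - 2 * tick_b X) = x - (u + offset j).
    by lia.
  by [].
split=> [[_ _]|c_u]; last by split=> //; rewrite Ret_N c_u.
by rewrite Ret_N; case: ca_run => // /(_ isT).
Qed.

Lemma Win_N_cell X w u :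
  0 <= x + N%:Z + u - 2 * tick_a X -> 0 <= x + N%:Z - u - 2 * tick_b X ->
  is_N (Win X w) (x + N%:Z + u - tick_a X) (x + N%:Z - u - tick_b X) <->
  w != cell_window t u.
Proof.
move=> a_ge0 b_ge0; have [ta_ge0 tb_ge0 _] := tick_spec X.
rewrite Win_N_positionP; try lia.
have cellP j : (if w j
    then is_P Main (x + N%:Z + u - tick_a X - (N%:Z - offset j - tick_a X))
                   (x + N%:Z - u - tick_b X - (N%:Z + offset j - tick_b X))
    else is_P (Ret X j) (x + N%:Z + u - tick_a X - tick_a X)
                        (x + N%:Z - u - tick_b X - tick_b X))
    <-> w j != cell_window t u j.
  rewrite ffunE; case: (w j).
    have -> : x + N%:Z + u - tick_a X - (N%:Z - offset j - tick_a X) = x + (u + offset j).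
      by lia.
    have -> : x + N%:Z - u - tick_b X - (N%:Z + offset j - tick_b X) = x - (u + offset j).
      by lia.
    by rewrite t_spec; case: ca_run.
  have -> : x + N%:Z + u - tick_a X - tick_a X = x + N%:Z + u - 2 * tick_a X by lia.
  have -> : x + N%:Z - u - tick_b X - tick_b X = x + N%:Z - u - 2 * tick_b X by lia.
  by rewrite Ret_P_cell //; case: ca_run.
split=> [[j /cellP]|w_neq]; first by apply: contraNneq => ->.
have /forallPn[j /cellP] : ~~ [forall j, w j == cell_window t u j].
  by apply: contra w_neq => /forallP w_eq; apply/eqP/ffunP => j; apply/eqP.
by exists j.
Qed.

Lemma level_specS : level_spec t.+1.
Proof.
move=> v; have le_rN : (r * t <= N * t)%N by rewrite leq_mul2r; apply/orP; right; lia.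
have [v_out|v_in] := ltrP (N * t.+1)%:Z `|v|.
  have -> : ca_run delta t.+1 v by apply: ca_run_blank; move: v_out; rewrite !mulnS; lia.
  by split=> // -[]; move: v_out; lia.
have -> : (N * t.+1)%:Z = x + N%:Z by rewrite mulnS PoszD addrC.
rewrite ca_runS; split.
  case=> a_ge0 b_ge0 Main_P; apply/negP => delta_cw; apply: Main_P.
  have [X [a_ge b_ge]] : exists X, 0 <= x + N%:Z + v - 2 * tick_a X /\
                                   0 <= x + N%:Z - v - 2 * tick_b X.
    case: (lerP 2 (x + N%:Z + v)) => ?; [exists true | exists false];
      by rewrite /tick_a /tick_b; lia.
  have [ta_ge0 tb_ge0 _] := tick_spec X.
  rewrite Main_N_positionP //; exists X, (cell_window t v); split=> //.
  by split; [lia | lia | rewrite Win_N_cell // eqxx].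
move=> ndelta_cw; have v_in' : `|v| <= (r * t.+1)%:Z.
  rewrite leNgt; apply/negP => /ca_run_blank; rewrite ca_runS; exact/negP.
move: v_in'; rewrite mulnS => v_in'.
split; try lia; rewrite Main_N_positionP; try lia.
case=> X [w [delta_w [_ _]]]; have [ta_ge0 tb_ge0 tick_sum] := tick_spec X.
rewrite Win_N_cell; try lia; move/negP; rewrite negbK => /eqP w_cw.
by move: ndelta_cw; rewrite -w_cw delta_w.
Qed.

End LevelStep.

Lemma level_spec_all t : level_spec t.
Proof. by elim: t => [|t /level_specS]; first exact: level_spec0. Qed.

Lemma cell_N_position t u : `|u| <= (N * t)%:Z ->
  is_N Main ((N * t)%:Z + u) ((N * t)%:Z - u) <-> ca_run delta t u.
Proof.
move=> u_in; have [P_of_dead dead_of_P] := level_spec_all t u.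
have [a_ge0 b_ge0] : 0 <= (N * t)%:Z + u /\ 0 <= (N * t)%:Z - u by lia.
case: ca_run P_of_dead dead_of_P => P_of_dead dead_of_P; split=> // u_N.
  by apply: NNPP => u_P; have := P_of_dead (And3 a_ge0 b_ge0 u_P).
by have [_ _] := dead_of_P isT.
Qed.

End CellularAutomatonGame.

Unset Implicit Arguments.

Theorem corollary1 (r : nat) (delta : {ffun 'I_(2 * r + 1) -> bool} -> bool) :
  blank_one delta ->
  exists (N : nat) (D : seq (vec (2 * N + 2))),
    (0 < N)%N /\ positive_sums D /\
    forall (t : nat) (u : int), `|u| <= (N * t)%:Z ->
      game_value_is D (ca_position N t u) (ca_run delta t u).
Proof.
move=> delta_blank.
exists (2 ^ (2 * r + 1) + 2 * r + 2)%N, (token_game _ (@state_idx r) (ca_moves delta)).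
split; first by rewrite addn2.
split; first exact: token_game_positive_sums (@state_idx_inj r) (@state_idx_range r)
  (@ca_moves_to_neq r delta) (@ca_moves_sum_gt0 r delta).
by move=> t u u_in; split=> /(cell_N_position delta_blank u_in).
Qed.
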